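(* Let $p$ be a prime, $V$ a $4$-dimensional vector space over $\mathbb{F}_p$, $G=GL(V)$, and for $r=1,2,3$ let $\mathcal{L}_r$ be the set of $r$-dimensional subspaces of $V$. Let $\eta:\mathbb{Z}\mathcal{L}_2\to\mathbb{Z}\mathcal{L}_2$ be the $\mathbb{Z}$-linear map with $\eta(x)=\sum_{y\in\mathcal{L}_2,\ y\cap x=\{0\}} y$ for $x\in\mathcal{L}_2$; let $\phi:\mathbb{Z}\mathcal{L}_1\to\mathbb{Z}\mathcal{L}_2$ be given by $\phi(x)=\sum_{y\in\mathcal{L}_2,\ x\cap y=\{0\}}y$ for $x\in\mathcal{L}_1$; and let $\psi:\mathbb{Z}\mathcal{L}_3\to\mathbb{Z}\mathcal{L}_2$ be given by $\psi(x)=\sum_{y\in\mathcal{L}_2,\ x\cap y\neq y}y$ for $x\in\mathcal{L}_3$. Denote by $\overline{\eta},\overline{\phi},\overline{\psi}$ the induced maps on the corresponding $\mathbb{F}_p$-permutation modules $\mathbb{F}_p\mathcal{L}_r$. For $i\ge 0$ let $M_i=\{m\in\mathbb{Z}\mathcal{L}_2 : \eta(m)\in p^i\mathbb{Z}\mathcal{L}_2\}$ and let $\overline{M_i}=(M_i+p\mathbb{Z}\mathcal{L}_2)/p\mathbb{Z}\mathcal{L}_2\subseteq\mathbb{F}_p\mathcal{L}_2$. Let $\mathbf{1}=\sum_{x\in\mathcal{L}_2}x\in\mathbb{F}_p\mathcal{L}_2$. Then: (1) $\ker\overline{\eta}\subseteq\overline{M_1}$; (2) $\mathbb{F}_p\mathbf{1}\oplus(\operatorname{im}\overline{\phi}+\operatorname{im}\overline{\psi})\subseteq\overline{M_2}$;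 (3) $\mathbb{F}_p\mathbf{1}\oplus\operatorname{im}\overline{\eta}\subseteq\overline{M_3}$; (4) $\mathbb{F}_p\mathbf{1}\subseteq\overline{M_4}$.
   Context: $\mathbb{Z}\mathcal{L}_r$ and $\mathbb{F}_p\mathcal{L}_r$ denote the free $\mathbb{Z}$-module and the $\mathbb{F}_p$-vector space with basis $\mathcal{L}_r$; reduction mod $p$ gives $\mathbb{F}_p\mathcal{L}_r=\mathbb{Z}\mathcal{L}_r/p\mathbb{Z}\mathcal{L}_r$. The direct sums are inside $\mathbb{F}_p\mathcal{L}_2=\mathbb{F}_p\mathbf{1}\oplus Y_2$, where $Y_2$ is the subspace of vectors whose coefficients sum to $0$ (the images of $\overline{\eta},\overline{\phi},\overline{\psi}$ lie in $Y_2$). *)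

From mathcomp Require Import all_boot all_order all_algebra.
Set Implicit Arguments. Unset Strict Implicit. Unset Printing Implicit Defensive.
Import GRing.Theory.
Local Open Scope ring_scope.

(* V = 'rV['F_p]_4.  A subspace of V is represented by its canonical
   row-space matrix: A : 'M['F_p]_4 with <<A>> = A.  L_r = subspaces of rank r. *)
Definition is_subsp (p r : nat) (A : 'M['F_p]_4) : bool :=
  (<<A>>%MS == A) && (mxrank A == r).

Definition subsp (p r : nat) := {A : 'M['F_p]_4 | is_subsp r A}.

(* R L_r is modelled as {ffun subsp p r -> R} (coefficient functions). *)

Definition meet0 (p r s : nat) (x : subsp p r) (y : subsp p s) : bool :=
  (mxrank (val x :&: val y)%MS == 0%N).

Definition eta (R : pzRingType) (p : nat) (m : {ffun subsp p 2 -> R})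
  : {ffun subsp p 2 -> R} :=
  [ffun y => \sum_(x : subsp p 2 | meet0 x y) m x].

Definition phi (R : pzRingType) (p : nat) (m : {ffun subsp p 1 -> R})
  : {ffun subsp p 2 -> R} :=
  [ffun y => \sum_(x : subsp p 1 | meet0 x y) m x].

(* psi(x) = sum of y in L_2 with x ∩ y <> y (i.e. y not contained in x), x in L_3 *)
Definition psi (R : pzRingType) (p : nat) (m : {ffun subsp p 3 -> R})
  : {ffun subsp p 2 -> R} :=
  [ffun y => \sum_(x : subsp p 3 | ~~ (val y <= val x)%MS) m x].

Definition red (p : nat) (m : {ffun subsp p 2 -> int}) : {ffun subsp p 2 -> 'F_p} :=
  [ffun y => (m y)%:~R].

Definition inM (p i : nat) (m : {ffun subsp p 2 -> int}) : Prop :=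
  forall y, ((p ^ i)%N%:Z %| eta m y)%Z.

(* Mbar_i = (M_i + p Z L_2)/p Z L_2 = image of M_i under reduction mod p *)
Definition inMbar (p i : nat) (v : {ffun subsp p 2 -> 'F_p}) : Prop :=
  exists m, inM i m /\ red m = v.

(* c * 1, where 1 = sum of all x in L_2 is the all-ones vector of F_p L_2 *)
Definition cone2 (p : nat) (c : 'F_p) : {ffun subsp p 2 -> 'F_p} := [ffun _ => c * 1].

From mathcomp Require Import all_boot all_order all_algebra.
From mathcomp Require Import ring zify.
Set Implicit Arguments. Unset Strict Implicit. Unset Printing Implicit Defensive.
Import GRing.Theory.
Local Open Scope ring_scope.

(* Every incidence number in sight counts 2-subspaces Z of a subspace X of F_p^4 that
   meet given subspaces A and B trivially.  An ordered pair (u, v) is a basis of such a Z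
   iff u lies in X outside A and B, and v lies in X outside A + u and B + u; as each
   2-subspace has (p^2 - 1)(p^2 - p) ordered bases, inclusion-exclusion on these pairs turns
   each count into a polynomial in p determined by the ranks of A, B, A :&: B and A + B.
   Hence, lifting coefficients from F_p to {0, ..., p - 1}: the integer matrices of
   eta o phi and eta o psi have all entries divisible by p^2, the matrix of eta o eta is
   congruent to -p(p - 1) times that of eta modulo p^3, and eta sends the constant vector c
   to c p^4.  This gives the inclusions, lifting eta w + p(p - 1) w for an element eta w of
   im eta.  The sums are direct because the coordinate sum kills the images (every column
   count is divisible by p) but not 1, as the number (p^2 + 1)(p^2 + p + 1) of 2-subspaces
   is prime to p. *)

Section RowSpaces.
Variable F : fieldType.

Lemma mxrank_adds_row m n (A : 'M[F]_(m, n)) (u : 'rV_n) :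
  \rank (A + u)%MS = (\rank A + ~~ (u <= A)%MS)%N.
Proof.
have [uA | uNA] := boolP (u <= A)%MS; first by rewrite (addsmx_idPl uA) addn0.
have u_neq0 : u != 0 by apply: contraNneq uNA => ->; exact: sub0mx.
have := mxrank_sum_cap A u; rewrite rank_rV u_neq0.
suff -> : \rank (A :&: u)%MS = 0%N by rewrite addn0.
have [le_cap eq_cap] := mxrank_leqif_eq (capmxSr A u).
move: le_cap eq_cap; rewrite rank_rV u_neq0 leq_eqVlt ltnS leqn0.
case/orP=> [/eqP -> | /eqP //]; rewrite eqxx => /esym/andP[_ u_cap].
by case/negP: uNA; exact: submx_trans u_cap (capmxSl A u).
Qed.

Lemma mxrank_cap_adds_row m1 m2 n (A : 'M[F]_(m1, n)) (B : 'M[F]_(m2, n)) (u : 'rV_n) :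
  ~~ (u <= A)%MS -> ~~ (u <= B)%MS ->
  \rank ((A + u) :&: (B + u))%MS = (\rank (A :&: B)%MS + 1 + (u <= A + B)%MS)%N.
Proof.
move=> uNA uNB.
have eq_sum : ((A + u) + (B + u) :=: (A + B) + u)%MS.
  rewrite addsmxA -(addsmxA A) (addsmxC u B) addsmxA.
  exact: addsmx_idPl (addsmxSr _ _).
have := mxrank_sum_cap (A + u)%MS (B + u)%MS.
rewrite eq_sum !mxrank_adds_row (negbTE uNA) (negbTE uNB).
have := mxrank_sum_cap A B; case: (u <= A + B)%MS => /=; lia.
Qed.

Lemma span2_meet0 m n (A : 'M[F]_(m, n)) (u v : 'rV_n) :
  (\rank (u + v)%MS == 2%N) && (\rank ((u + v) :&: A)%MS == 0%N)
  = ~~ (u <= A)%MS && ~~ (v <= A + u)%MS.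
Proof.
have := mxrank_sum_cap A (u + v)%MS; rewrite capmxC.
rewrite addsmxA !mxrank_adds_row rank_rV.
have := mxrankS (capmxSl (u + v)%MS A); rewrite mxrank_adds_row rank_rV.
by case: (u <= A)%MS; case: (v <= A + u)%MS; case: (u != 0); case: (v <= u)%MS => /=; lia.
Qed.

End RowSpaces.

Lemma PoszX (m k : nat) : (m ^ k)%N%:Z = m%:Z ^+ k.
Proof. by rewrite -natrXE rmorphXn. Qed.

Section FiniteRowSpaces.
Variables (F : finFieldType) (n : nat).
Local Notation q := (#|F|%:Z).
Local Notation vec := 'rV[F]_n.

Lemma card_submx m (A : 'M[F]_(m, n)) :
  #|[set v : vec | (v <= A)%MS]|%:Z = q ^+ \rank A.
Proof.
pose f (w : 'rV_(\rank A)) := w *m row_base A.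
have f_inj : injective f by apply: row_free_inj; exact: row_base_free.
have -> : [set v : vec | (v <= A)%MS] = f @: setT.
  apply/setP => v; rewrite inE; apply/idP/imsetP => [|[w _ ->]].
    by rewrite -(eq_row_base A) => /submxP[w ->]; exists w.
  by apply: submx_trans (submxMl _ _) _; rewrite eq_row_base.
by rewrite card_imset // cardsT card_mx mul1n PoszX.
Qed.

Definition avoiding m1 m2 m3 (X : 'M[F]_(m1, n)) (A : 'M_(m2, n)) (B : 'M_(m3, n))
  : {set vec} := [set v | [&& (v <= X)%MS, ~~ (v <= A)%MS & ~~ (v <= B)%MS]].

Lemma card_avoiding m1 m2 m3 (X : 'M[F]_(m1, n)) (A : 'M_(m2, n)) (B : 'M_(m3, n)) :
  (A <= X)%MS -> (B <= X)%MS ->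
  #|avoiding X A B|%:Z
    = q ^+ \rank X - q ^+ \rank A - q ^+ \rank B + q ^+ \rank (A :&: B)%MS.
Proof.
move=> sAX sBX.
set SX := [set v : vec | (v <= X)%MS]; set SA := [set v : vec | (v <= A)%MS].
set SB := [set v : vec | (v <= B)%MS].
have -> : avoiding X A B = SX :\: (SA :|: SB).
  by apply/setP => v; rewrite !inE negb_or andbC.
have capS : SA :&: SB = [set v : vec | (v <= A :&: B)%MS].
  by apply/setP => v; rewrite !inE sub_capmx.
have sUX : SA :|: SB \subset SX.
  by apply/subsetP => v; rewrite !inE => /orP[] /submx_trans; apply.
have := cardsUI SA SB; rewrite capS; have := cardsID (SA :|: SB) SX.
rewrite (setIidPr sUX) => /(congr1 Posz) + /(congr1 Posz).
rewrite !PoszD !card_submx => <- /(canRL (addrK _)) ->; ring.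
Qed.

Lemma card_avoiding_adds_row m1 m2 m3 (X : 'M[F]_(m1, n)) (A : 'M_(m2, n)) (B : 'M_(m3, n))
    (u : vec) :
  (A <= X)%MS -> (B <= X)%MS -> u \in avoiding X A B ->
  #|avoiding X (A + u)%MS (B + u)%MS|%:Z
    = q ^+ \rank X - q ^+ (\rank A).+1 - q ^+ (\rank B).+1
      + q ^+ (\rank (A :&: B)%MS + 1 + (u <= A + B)%MS).
Proof.
move=> sAX sBX; rewrite inE => /and3P[uX uNA uNB].
rewrite card_avoiding ?addsmx_sub ?sAX ?sBX ?uX // !mxrank_adds_row.
by rewrite (negbTE uNA) (negbTE uNB) mxrank_cap_adds_row // !addn1.
Qed.

Definition nframes m1 m2 m3 (X : 'M[F]_(m1, n)) (A : 'M_(m2, n)) (B : 'M_(m3, n))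
  : nat := \sum_(u in avoiding X A B) #|avoiding X (A + u)%MS (B + u)%MS|.

Lemma nframesE m1 m2 m3 (X : 'M[F]_(m1, n)) (A : 'M_(m2, n)) (B : 'M_(m3, n)) :
  (A <= X)%MS -> (B <= X)%MS ->
  let: (x, a, b, c, s) := (\rank X, \rank A, \rank B, \rank (A :&: B)%MS, \rank (A + B)%MS) in
  (nframes X A B)%:Z
    = (q ^+ x - q ^+ a - q ^+ b + q ^+ c) * (q ^+ x - q ^+ a.+1 - q ^+ b.+1 + q ^+ c.+1)
      + (q ^+ s - q ^+ a - q ^+ b + q ^+ c) * (q ^+ c.+2 - q ^+ c.+1).
Proof.
move=> sAX sBX; rewrite /nframes rmorph_sum /=.
set c := \rank (A :&: B)%MS.
set base := q ^+ \rank X - _ - _ + q ^+ c.+1; set d := q ^+ c.+2 - q ^+ c.+1.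
have card_u u : u \in avoiding X A B ->
    #|avoiding X (A + u)%MS (B + u)%MS|%:Z = base + (if (u <= A + B)%MS then d else 0).
  move=> uin; rewrite card_avoiding_adds_row // /base /d.
  by case: (u <= A + B)%MS; rewrite /= ?addn0 ?addn1 //; ring.
rewrite (eq_bigr _ card_u) big_split /= sumr_const -big_mkcondr /=.
have -> : \sum_(u | (u \in avoiding X A B) && (u <= A + B)%MS) d
          = \sum_(u in avoiding (A + B)%MS A B) d.
  apply: eq_bigl => u; rewrite !inE.
  have [uAB|] := boolP (u <= A + B)%MS; last by rewrite andbF.
  by rewrite andbT (submx_trans uAB) // addsmx_sub sAX.
rewrite sumr_const !pmulrn !mulrzz card_avoiding ?addsmxSl ?addsmxSr //.
by rewrite card_avoiding // /base /d; ring.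
Qed.

Lemma span2_in_avoiding m1 m2 m3 (X : 'M[F]_(m1, n)) (A : 'M_(m2, n)) (B : 'M_(m3, n))
    (u v : vec) :
  (\rank (u + v)%MS == 2%N)
    && [&& (u + v <= X)%MS, \rank ((u + v) :&: A)%MS == 0%N & \rank ((u + v) :&: B)%MS == 0%N]
  = (u \in avoiding X A B) && (v \in avoiding X (A + u)%MS (B + u)%MS).
Proof.
rewrite !inE addsmx_sub.
have := span2_meet0 A u v; have := span2_meet0 B u v.
case: (\rank (u + v)%MS == 2%N); case: (\rank ((u + v) :&: A)%MS == 0%N);
  case: (\rank ((u + v) :&: B)%MS == 0%N); case: (u <= A)%MS; case: (u <= B)%MS;
  case: (v <= A + u)%MS; case: (v <= B + u)%MS; case: (u <= X)%MS; by case: (v <= X)%MS.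
Qed.

End FiniteRowSpaces.

Lemma cards_guard (T : finType) (b : bool) (A : {set T}) :
  #|[set x | b && (x \in A)]| = if b then #|A| else 0%N.
Proof.
case: b; first by apply: eq_card => x; rewrite inE.
by apply/eqP; rewrite cards_eq0; apply/eqP/setP => x; rewrite !inE.
Qed.

Lemma card_set_indicator (T : finType) (P : pred T) :
  #|[set x | P x]| = (\sum_x (P x : nat))%N.
Proof. by rewrite -sum1dep_card big_mkcond; apply: eq_bigr => x _; case: (P x). Qed.

Section TwoDimensionalSubspaces.
Variables (p : nat) (p_pr : prime p).
Local Notation vec := 'rV['F_p]_4.
Local Notation q := (p%:Z).
Local Notation L2 := (subsp p 2).
Local Notation O := (0 : 'M['F_p]_4).

Lemma card_Fpz : #|'F_p|%:Z = q. Proof. by rewrite card_Fp. Qed.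

Definition nbases2 : int := (q ^+ 2 - 1) * (q ^+ 2 - q).

Lemma nbases2_neq0 : nbases2 != 0.
Proof.
have p_gt1 : (1 < q)%R by rewrite ltz_nat prime_gt1.
by rewrite mulf_neq0 // subr_eq0; apply/negP => /eqP; nia.
Qed.

Lemma eq_span2_subsp (Z : L2) (u v : vec) :
  (<<(u + v)%MS>>%MS == val Z)
  = (u \in avoiding (val Z) O O) && (v \in avoiding (val Z) (O + u)%MS (O + u)%MS).
Proof.
case: Z => Z /= /andP[/eqP genZ /eqP rkZ].
rewrite -span2_in_avoiding !capmx0 mxrank0 eqxx !andbT -{1}genZ.
apply/eqP/andP => [/genmxP eqSZ | [rk2 sSZ]].
  by split; [rewrite (eqmxP eqSZ) rkZ | case/andP: eqSZ].
by apply/genmxP; rewrite -(mxrank_leqif_eq sSZ).2 rkZ.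
Qed.

Lemma card_span2_eq_subsp (Z : L2) :
  (\sum_(u : vec) #|[set v : vec | <<(u + v)%MS>>%MS == val Z]|)%:Z = nbases2.
Proof.
have -> : \sum_(u : vec) #|[set v : vec | <<(u + v)%MS>>%MS == val Z]|
          = nframes (val Z) O O.
  rewrite /nframes [RHS]big_mkcond /=; apply: eq_bigr => u _.
  by under eq_finset do rewrite eq_span2_subsp; rewrite cards_guard.
have O_sub : (O <= val Z)%MS := sub0mx _ _.
have /= := nframesE O_sub O_sub.
rewrite capmx0 addsmx0 !mxrank0 card_Fpz => ->.
by case/andP: (valP Z) => _ /eqP ->; rewrite /nbases2; ring.
Qed.

Lemma span2_indicator (f : pred 'M['F_p]_4) (u v : vec) :
  ((\rank (u + v)%MS == 2%N) && f <<(u + v)%MS>>%MS : nat)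
  = (\sum_(Z : L2) (f (val Z) && (<<(u + v)%MS>>%MS == val Z) : nat))%N.
Proof.
have [rk2 | rkN2] := boolP (\rank (u + v)%MS == 2%N); last first.
  rewrite big1 // => Z _; case: eqP => [eqSZ|]; last by rewrite andbF.
  by case/negP: rkN2; rewrite -(mxrank_gen (u + v)%MS) eqSZ; case/andP: (valP Z).
have S_L2 : is_subsp 2 <<(u + v)%MS>>%MS by rewrite /is_subsp genmx_id mxrank_gen rk2 eqxx.
rewrite (bigD1 (exist (@is_subsp p 2) _ S_L2)) //= eqxx andbT big1 ?addn0 // => Z neqZ.
by case: eqP => [eqSZ|]; rewrite ?andbF //; case/eqP: neqZ; apply: val_inj.
Qed.

Lemma card_span2 (f : pred 'M['F_p]_4) :
  (\sum_(u : vec) #|[set v : vec | (\rank (u + v)%MS == 2%N) && f <<(u + v)%MS>>%MS]|)%:Z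
  = nbases2 * #|[set Z : L2 | f (val Z)]|%:Z.
Proof.
have -> : (\sum_(u : vec) #|[set v : vec | (\rank (u + v)%MS == 2%N) && f <<(u + v)%MS>>%MS]|
    = \sum_(Z : L2 | f (val Z)) \sum_(u : vec) #|[set v : vec | <<(u + v)%MS>>%MS == val Z]|)%N.
  rewrite exchange_big /=; apply: eq_bigr => u _.
  rewrite card_set_indicator (eq_bigr _ (fun Z _ => card_set_indicator _)) exchange_big /=.
  apply: eq_bigr => v _.
  rewrite span2_indicator [RHS]big_mkcond /=.
  by apply: eq_bigr => Z _; case: (f (val Z)).
rewrite (big_morph Posz PoszD (erefl 0%:Z)) card_set_indicator.
rewrite (big_morph Posz PoszD (erefl 0%:Z)).
rewrite big_mkcond mulr_sumr; apply: eq_bigr => Z _ /=.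
by case: (f (val Z)); rewrite ?card_span2_eq_subsp ?mulr1 ?mulr0.
Qed.

Definition subsp2_avoiding m1 m2 m3 (X : 'M['F_p]_(m1, 4)) (A : 'M_(m2, 4))
    (B : 'M_(m3, 4)) : {set L2} :=
  [set Z : L2 | [&& (val Z <= X)%MS, \rank (val Z :&: A)%MS == 0%N
                  & \rank (val Z :&: B)%MS == 0%N]].

Lemma card_subsp2_avoiding m1 m2 m3 (X : 'M['F_p]_(m1, 4)) (A : 'M_(m2, 4)) (B : 'M_(m3, 4)) :
  (A <= X)%MS -> (B <= X)%MS ->
  let: (x, a, b, c, s) := (\rank X, \rank A, \rank B, \rank (A :&: B)%MS, \rank (A + B)%MS) in
  nbases2 * #|subsp2_avoiding X A B|%:Z
    = (q ^+ x - q ^+ a - q ^+ b + q ^+ c) * (q ^+ x - q ^+ a.+1 - q ^+ b.+1 + q ^+ c.+1)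
      + (q ^+ s - q ^+ a - q ^+ b + q ^+ c) * (q ^+ c.+2 - q ^+ c.+1).
Proof.
move=> sAX sBX; rewrite -card_Fpz -(nframesE sAX sBX) /subsp2_avoiding.
rewrite -(card_span2 (fun M => [&& (M <= X)%MS, \rank (M :&: A)%MS == 0%N
                                  & \rank (M :&: B)%MS == 0%N])).
congr Posz; rewrite /nframes [RHS]big_mkcond /=; apply: eq_bigr => u _.
under eq_finset => v do
  rewrite genmxE (cap_eqmx (genmxE _) (eqmx_refl A)) (cap_eqmx (genmxE _) (eqmx_refl B)).
by under eq_finset do rewrite span2_in_avoiding; rewrite cards_guard.
Qed.

Lemma card_subsp2_avoiding_diag m1 m2 (X : 'M['F_p]_(m1, 4)) (A : 'M_(m2, 4)) :
  (A <= X)%MS ->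
  nbases2 * #|subsp2_avoiding X A A|%:Z
    = (q ^+ \rank X - q ^+ \rank A) * (q ^+ \rank X - q ^+ (\rank A).+1).
Proof.
move=> sAX; have /= -> := card_subsp2_avoiding sAX sAX.
rewrite (capmx_idPl (submx_refl A)) (addsmx_idPl (submx_refl A)).
by move: (\rank X) (\rank A) => x a; ring.
Qed.

Lemma mxrank_subsp r (x : subsp p r) : \rank (val x) = r.
Proof. by case/andP: (valP x) => _ /eqP. Qed.

Lemma meet0C r s (x : subsp p r) (y : subsp p s) : meet0 x y = meet0 y x.
Proof. by rewrite /meet0 capmxC. Qed.

Lemma card_subsp2_meet0 r (x : subsp p r) :
  nbases2 * #|[set y : L2 | meet0 x y]|%:Z = (q ^+ 4 - q ^+ r) * (q ^+ 4 - q ^+ r.+1).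
Proof.
have := card_subsp2_avoiding_diag (submx1 (val x)); rewrite mxrank1 mxrank_subsp => <-.
by congr (_ * Posz _); apply: eq_card => y; rewrite !inE submx1 meet0C /meet0 andbb.
Qed.

Lemma card_subsp2_sub r (x : subsp p r) :
  nbases2 * #|[set y : L2 | (val y <= val x)%MS]|%:Z = (q ^+ r - 1) * (q ^+ r - q).
Proof.
have := card_subsp2_avoiding_diag (sub0mx 4 (val x) : (O <= val x)%MS).
rewrite mxrank0 mxrank_subsp expr0 expr1 => <-.
by congr (_ * Posz _); apply: eq_card => y; rewrite !inE capmx0 mxrank0 andbT.
Qed.

Lemma card_L2 : #|{: L2}|%:Z = (q ^+ 2 + 1) * (q ^+ 2 + q + 1).
Proof.
apply: (mulfI nbases2_neq0).
have := card_subsp2_avoiding_diag (sub0mx 4 1%:M : (O <= 1%:M)%MS).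
rewrite mxrank1 mxrank0 expr0 expr1 (_ : subsp2_avoiding _ _ _ = setT) ?cardsT => [->|].
  by rewrite /nbases2; ring.
by apply/setP => y; rewrite !inE submx1 capmx0 mxrank0.
Qed.

Lemma card_L2_ndvd : ~~ (q %| #|{: L2}|%:Z)%Z.
Proof.
have -> : #|{: L2}|%:Z = q * (q ^+ 3 + q ^+ 2 + 2 * q + 1) + 1 by rewrite card_L2; ring.
by rewrite rpredDl ?dvdz_mulr // dvdz1; apply: contraTneq (prime_gt1 p_pr) => /= ->.
Qed.

Lemma card_meet0_L2 (y : L2) : #|[set x : L2 | meet0 x y]|%:Z = q ^+ 4.
Proof.
apply: (mulfI nbases2_neq0); under eq_finset do rewrite meet0C.
by rewrite card_subsp2_meet0 /nbases2; ring.
Qed.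

Lemma dvdz_card_meet0_L1 (x : subsp p 1) : (q %| #|[set y : L2 | meet0 x y]|%:Z)%Z.
Proof.
have -> : #|[set y : L2 | meet0 x y]|%:Z = q ^+ 2 * (q ^+ 2 + q + 1).
  by apply: (mulfI nbases2_neq0); rewrite card_subsp2_meet0 /nbases2; ring.
by apply/dvdzP; exists (q * (q ^+ 2 + q + 1)); ring.
Qed.

Lemma dvdz_card_notsub_L3 (x : subsp p 3) :
  (q %| #|[set y : L2 | ~~ (val y <= val x)%MS]|%:Z)%Z.
Proof.
have card_sub : #|[set y : L2 | (val y <= val x)%MS]|%:Z = q ^+ 2 + q + 1.
  by apply: (mulfI nbases2_neq0); rewrite card_subsp2_sub /nbases2; ring.
have -> : [set y : L2 | ~~ (val y <= val x)%MS] = ~: [set y : L2 | (val y <= val x)%MS].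
  by apply/setP => y; rewrite !inE.
have /(congr1 Posz) := cardsC [set y : L2 | (val y <= val x)%MS].
rewrite PoszD card_sub card_L2 => /(canRL (addKr _)) ->.
by apply/dvdzP; exists (q * (q ^+ 2 + q + 1)); ring.
Qed.

Lemma card_meet0_pair r s (x : subsp p r) (y : subsp p s) :
  let: (c, t) := (\rank (val x :&: val y)%MS, \rank (val x + val y)%MS) in
  nbases2 * #|[set z : L2 | meet0 x z && meet0 z y]|%:Z
    = (q ^+ 4 - q ^+ r - q ^+ s + q ^+ c) * (q ^+ 4 - q ^+ r.+1 - q ^+ s.+1 + q ^+ c.+1)
      + (q ^+ t - q ^+ r - q ^+ s + q ^+ c) * (q ^+ c.+2 - q ^+ c.+1).
Proof.
have /= := card_subsp2_avoiding (submx1 (val x)) (submx1 (val y)).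
rewrite mxrank1 !mxrank_subsp => <-.
by congr (_ * Posz _); apply: eq_card => z; rewrite !inE submx1 meet0C.
Qed.

Lemma dvdz_card_meet0_pair1 (w : subsp p 1) (y : L2) :
  (q ^+ 2 %| #|[set z : L2 | meet0 w z && meet0 z y]|%:Z)%Z.
Proof.
have /= := card_meet0_pair w y.
have := mxrank_sum_cap (val w) (val y); have := mxrankS (capmxSl (val w) (val y)).
rewrite !mxrank_subsp => + /(canRL (addnK _)) ->; set n := #|_|.
case: (\rank (val w :&: val y)%MS) => [|[|//]] _ E /=.
- have -> : n%:Z = q ^+ 4 - q ^+ 2 by apply: (mulfI nbases2_neq0); rewrite E /nbases2; ring.
  by apply/dvdzP; exists (q ^+ 2 - 1); ring.
- have -> : n%:Z = q ^+ 4 by apply: (mulfI nbases2_neq0); rewrite E /nbases2; ring.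
  by apply/dvdzP; exists (q ^+ 2); ring.
Qed.

Lemma dvdz_card_meet0_pair2 (x y : L2) :
  (q ^+ 3 %| #|[set z : L2 | meet0 x z && meet0 z y]|%:Z + q * (q - 1) * (meet0 x y)%:Z)%Z.
Proof.
have /= := card_meet0_pair x y; rewrite /meet0.
have := mxrank_sum_cap (val x) (val y); have := mxrankS (capmxSl (val x) (val y)).
rewrite !mxrank_subsp => + /(canRL (addnK _)) ->; set n := #|_|.
case: (\rank (val x :&: val y)%MS) => [|[|[|//]]] _ E /=.
- have -> : n%:Z = q ^+ 4 - q ^+ 3 - q ^+ 2 + q.
    by apply: (mulfI nbases2_neq0); rewrite E /nbases2; ring.
  by apply/dvdzP; exists (q - 1); ring.
- have -> : n%:Z = q ^+ 4 - q ^+ 3 by apply: (mulfI nbases2_neq0); rewrite E /nbases2; ring.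
  by apply/dvdzP; exists (q - 1); ring.
- have -> : n%:Z = q ^+ 4 by apply: (mulfI nbases2_neq0); rewrite E /nbases2; ring.
  by apply/dvdzP; exists q; ring.
Qed.

Lemma dvdz_card_notsub_meet0 (w : subsp p 3) (y : L2) :
  (q ^+ 2 %| #|[set z : L2 | ~~ (val z <= val w)%MS && meet0 z y]|%:Z)%Z.
Proof.
set W := [set z : L2 | (val z <= val w)%MS]; set Y := [set z : L2 | meet0 z y].
have -> : [set z : L2 | ~~ (val z <= val w)%MS && meet0 z y] = Y :\: W.
  by apply/setP => z; rewrite !inE.
have /(congr1 Posz) := cardsID W Y.
pose S := subsp2_avoiding (val w) (val w :&: val y)%MS (val w :&: val y)%MS.
have -> : Y :&: W = S.
  apply/setP => z; rewrite !inE andbb andbC /meet0.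
  have [szw|] := boolP (val z <= val w)%MS; last by [].
  by rewrite capmxA (cap_eqmx (capmx_idPl szw) (eqmx_refl (val y))).
rewrite PoszD card_meet0_L2 => /(canRL (addKr _)) ->.
have := card_subsp2_avoiding_diag (capmxSl (val w) (val y)); rewrite -/S.
have := mxrank_sum_cap (val w) (val y); have := mxrankS (capmxSr (val w) (val y)).
have := rank_leq_col (val w + val y)%MS.
rewrite !mxrank_subsp; case: (\rank (val w :&: val y)%MS) => [|[|[|//]]]; first by lia.
- move=> _ _ _ E; have -> : #|S|%:Z = q ^+ 2.
    by apply: (mulfI nbases2_neq0); rewrite E /nbases2; ring.
  by apply/dvdzP; exists (q ^+ 2 - 1); ring.
- move=> _ _ _ E; have -> : #|S|%:Z = 0.
    by apply: (mulfI nbases2_neq0); rewrite E /nbases2; ring.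
  by apply/dvdzP; exists (q ^+ 2); ring.
Qed.

End TwoDimensionalSubspaces.

Lemma sumr_const_cond (R : nmodType) (I : finType) (P : pred I) (x : R) :
  \sum_(i | P i) x = x *+ #|[set i | P i]|.
Proof. by rewrite -sumr_const; apply: eq_bigl => i; rewrite inE. Qed.

Lemma sum_sum_cond (R : nmodType) (I J : finType) (rel : I -> J -> bool) (P : pred J)
    (m : I -> R) :
  \sum_(y | P y) \sum_(x | rel x y) m x = \sum_x m x *+ #|[set y | rel x y && P y]|.
Proof.
rewrite (exchange_big_dep xpredT) //=; apply: eq_bigr => x _.
by rewrite -sumr_const; apply: eq_bigl => y; rewrite inE andbC.
Qed.

Lemma dvdz_sum_mulrn (I : finType) (d : int) (m : I -> int) (n : I -> nat) :
  (forall x, (d %| (n x)%:Z)%Z) -> (d %| \sum_x m x *+ n x)%Z.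
Proof. by move=> dvd_n; apply: rpred_sum => x _; rewrite pmulrn mulrzz dvdz_mull. Qed.


Section ReductionModp.
Variables (p : nat) (p_pr : prime p).
Local Notation q := (p%:Z).
Local Notation L2 := (subsp p 2).

Definition lift (I : finType) (v : {ffun I -> 'F_p}) : {ffun I -> int} :=
  [ffun x => (v x : nat)%:Z].

Lemma lift_Fp (a : 'F_p) : ((a : nat)%:Z%:~R : 'F_p) = a.
Proof. by rewrite -natz mulrz_nat natr_Zp. Qed.

Lemma intr_sum_lift (I : finType) (P : pred I) (v : {ffun I -> 'F_p}) :
  ((\sum_(x | P x) lift v x)%:~R : 'F_p) = \sum_(x | P x) v x.
Proof. by rewrite mulrz_sumr; apply: eq_bigr => x _; rewrite ffunE lift_Fp. Qed.

Lemma redD (m1 m2 : {ffun L2 -> int}) : red (m1 + m2) = red m1 + red m2.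
Proof. by apply/ffunP => y; rewrite !ffunE intrD. Qed.

Lemma red_lift (v : {ffun L2 -> 'F_p}) : red (lift v) = v.
Proof. by apply/ffunP => y; rewrite !ffunE lift_Fp. Qed.

Lemma red_eta_lift (v : {ffun L2 -> 'F_p}) : red (eta (lift v)) = eta v.
Proof. by apply/ffunP => y; rewrite !ffunE intr_sum_lift. Qed.

Lemma red_phi_lift (v : {ffun subsp p 1 -> 'F_p}) : red (phi (lift v)) = phi v.
Proof. by apply/ffunP => y; rewrite !ffunE intr_sum_lift. Qed.

Lemma red_psi_lift (v : {ffun subsp p 3 -> 'F_p}) : red (psi (lift v)) = psi v.
Proof. by apply/ffunP => y; rewrite !ffunE intr_sum_lift. Qed.

Lemma red_mul_dvd (k : int) (m : {ffun L2 -> int}) :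
  (q %| k)%Z -> red [ffun y => k * m y] = 0.
Proof.
have q0 : (q%:~R : 'F_p) = 0 by rewrite -natz mulrz_nat pchar_Fp_0.
by move=> /dvdzP[k' ->]; apply/ffunP => y; rewrite !ffunE !intrM q0 mulr0 mul0r.
Qed.

Lemma inMD i (m1 m2 : {ffun L2 -> int}) : inM i m1 -> inM i m2 -> inM i (m1 + m2).
Proof.
move=> M1 M2 y; have -> : eta (m1 + m2) y = eta m1 y + eta m2 y.
  by rewrite !ffunE -big_split; apply: eq_bigr => x _; rewrite ffunE.
exact: rpredD.
Qed.

Lemma inM_le i j (m : {ffun L2 -> int}) : (j <= i)%N -> inM i m -> inM j m.
Proof. by move=> le_ji Mi y; apply: dvdz_trans (Mi y); exact: dvdn_exp2l. Qed.

Lemma inM_cone c : inM 4 (lift (cone2 c)).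
Proof.
move=> y; rewrite PoszX ffunE; under eq_bigr do rewrite !ffunE.
by rewrite sumr_const_cond pmulrn mulrzz card_meet0_L2 // dvdz_mull.
Qed.

Lemma inM_phi (a : {ffun subsp p 1 -> 'F_p}) : inM 2 (phi (lift a)).
Proof.
move=> y; rewrite PoszX ffunE; under eq_bigr do rewrite ffunE.
by rewrite sum_sum_cond; apply: dvdz_sum_mulrn => x; exact: dvdz_card_meet0_pair1.
Qed.

Lemma inM_psi (b : {ffun subsp p 3 -> 'F_p}) : inM 2 (psi (lift b)).
Proof.
move=> y; rewrite PoszX ffunE; under eq_bigr do rewrite ffunE.
by rewrite sum_sum_cond; apply: dvdz_sum_mulrn => x; exact: dvdz_card_notsub_meet0.
Qed.

Lemma inM_eta (w : {ffun L2 -> 'F_p}) :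
  inM 3 (eta (lift w) + [ffun y => q * (q - 1) * lift w y]).
Proof.
move=> y; rewrite PoszX ffunE; under eq_bigr do rewrite !ffunE.
rewrite big_split /= sum_sum_cond -mulr_sumr.
have -> : \sum_(x | meet0 x y) (w x : nat)%:Z = \sum_x lift w x * (meet0 x y)%:Z.
  rewrite big_mkcond; apply: eq_bigr => x _.
  by rewrite ffunE; case: (meet0 x y); rewrite ?mulr1 ?mulr0.
rewrite mulr_sumr -big_split /=; apply: rpred_sum => x _.
by rewrite pmulrn mulrzz mulrCA -mulrDr dvdz_mull ?dvdz_card_meet0_pair2.
Qed.

Lemma inM_ker (v : {ffun L2 -> 'F_p}) : eta v = 0 -> inM 1 (lift v).
Proof.
move=> eta0 y; rewrite expn1 (dvdz_pcharf (pchar_Fp p_pr)) ffunE intr_sum_lift.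
by move/ffunP/(_ y): eta0; rewrite !ffunE => ->.
Qed.

Lemma sum_coord_Fp (I : finType) (rel : I -> L2 -> bool) (m : I -> 'F_p) :
  (forall x, (q %| #|[set y | rel x y]|%:Z)%Z) -> \sum_(y : L2) \sum_(x | rel x y) m x = 0.
Proof.
move=> dvd_col; rewrite sum_sum_cond; apply: big1 => x _.
under eq_finset do rewrite andbT.
have : (p %| #|[set y | rel x y]|)%N := dvd_col x.
by rewrite (dvdn_pcharf (pchar_Fp p_pr)) => /eqP n0; rewrite -mulr_natr n0 mulr0.
Qed.

Lemma sum_phi (a : {ffun subsp p 1 -> 'F_p}) : \sum_(y : L2) phi a y = 0.
Proof. by under eq_bigr do rewrite ffunE; apply: sum_coord_Fp; exact: dvdz_card_meet0_L1. Qed.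

Lemma sum_psi (b : {ffun subsp p 3 -> 'F_p}) : \sum_(y : L2) psi b y = 0.
Proof. by under eq_bigr do rewrite ffunE; apply: sum_coord_Fp; exact: dvdz_card_notsub_L3. Qed.

Lemma sum_eta (w : {ffun L2 -> 'F_p}) : \sum_(y : L2) eta w y = 0.
Proof.
under eq_bigr do rewrite ffunE; apply: sum_coord_Fp => x.
by under eq_finset do rewrite meet0C; rewrite card_meet0_L2 // dvdz_exp.
Qed.

Lemma cone2_eq0 c : \sum_(y : L2) cone2 c y = 0 -> c = 0.
Proof.
under eq_bigr do rewrite ffunE mulr1.
rewrite sumr_const -mulr_natr => /eqP; rewrite mulf_eq0 -(dvdn_pcharf (pchar_Fp p_pr)).
have : ~~ (p %| #|{: L2}|)%N := card_L2_ndvd p_pr.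
by rewrite cardT -cardE => /negbTE ->; rewrite orbF => /eqP.
Qed.

End ReductionModp.

Theorem lemma3 (p : nat) (hp : prime p) :
  (forall v : {ffun subsp p 2 -> 'F_p}, eta v = 0 -> inMbar 1 v) /\
  ((forall (c : 'F_p) (a : {ffun subsp p 1 -> 'F_p}) (b : {ffun subsp p 3 -> 'F_p}),
      cone2 c = phi a + psi b -> c = 0) /\
   (forall (c : 'F_p) (a : {ffun subsp p 1 -> 'F_p}) (b : {ffun subsp p 3 -> 'F_p}),
      inMbar 2 (cone2 c + (phi a + psi b)))) /\
  ((forall (c : 'F_p) (w : {ffun subsp p 2 -> 'F_p}),
      cone2 c = eta w -> c = 0) /\
   (forall (c : 'F_p) (w : {ffun subsp p 2 -> 'F_p}),
      inMbar 3 (cone2 c + eta w))) /\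
  (forall c : 'F_p, inMbar 4 (cone2 c)).
Proof.
split; first by move=> v eta0; exists (lift v); split; [exact: inM_ker | exact: red_lift].
split; [split | split; [split |]].
- move=> c a b E; apply: (cone2_eq0 hp).
  by rewrite E (eq_bigr _ (fun y _ => ffunE _ y)) big_split /= sum_phi // sum_psi // addr0.
- move=> c a b; exists (lift (cone2 c) + (phi (lift a) + psi (lift b))); split.
    apply: inMD; first exact: inM_le (inM_cone hp c).
    by apply: inMD; [exact: inM_phi | exact: inM_psi].
  by rewrite !redD red_lift red_phi_lift red_psi_lift.
- by move=> c w E; apply: (cone2_eq0 hp); rewrite E sum_eta.
- move=> c w.
  exists (lift (cone2 c) + (eta (lift w) + [ffun y => p%:Z * (p%:Z - 1) * lift w y])).
  split; first by apply: inMD; [exact: inM_le (inM_cone hp c) | exact: inM_eta].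
  by rewrite !redD red_lift red_eta_lift red_mul_dvd ?addr0 // dvdz_mulr.
- by move=> c; exists (lift (cone2 c)); split; [exact: inM_cone | exact: red_lift].
Qed.
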